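(* Let $q\in\mathbf{k}$ be invertible. The Koszul dual operad of the operad of differential $q$-tridendriform algebras of weight zero is the operad of $\frac1q$-triassociative algebras $(T,\dashv,\vdash,\perp)$ equipped with one linear operator $\partial:T\to T$ lying in the centroid and satisfying $\partial^2=0$, i.e. $\partial(a\ast b)=\partial(a)\ast b=a\ast\partial(b)$ for all $a,b\in T$ and $\ast\in\{\dashv,\vdash,\perp\}$, and $\partial\circ\partial=0$.
   Context: $\mathbf{k}$ is a commutative unital ring (a field for Koszul duality). For $q\in\mathbf{k}$, the operad of differential $q$-tridendriform algebras of weight zero is the (nonsymmetric, quadratic) operad generated by three binary operations $\prec,\succ,\bullet$ and one unary operation $d$, subject to the $q$-tridendriform relations (with $\star_q:=\prec+\succ+q\bullet$): $(a\prec b)\prec c=a\prec(b\star_q c)$, $(a\succ b)\prec c=a\succ(b\prec c)$, $(a\star_q b)\succ c=a\succ(b\succ c)$, $(a\succ b)\bullet c=a\succ(b\bullet c)$, $(a\prec b)\bullet c=a\bullet(b\succ c)$, $(a\bullet b)\prec c=a\bullet(b\prec c)$, $(a\bullet b)\bullet c=a\bullet(b\bullet c)$, and the Leibniz relations $d(a\ast b)=d(a)\ast b+a\ast d(b)$ for $\ast\in\{\prec,\succ,\bullet\}$. Koszul duality of operads is in the sense of Ginzburg–Kapranov/Loday–Vallette. For $p\in\mathbf{k}$, a $p$-triassociative algebra is a $\mathbf{k}$-module $T$ with bilinear operations $\dashv,\vdash,\perp$ such that for all $a,b,c$: $(a\dashv b)\dashv c=a\dashv(b\dashv c)$, $(a\dashv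 b)\dashv c=a\dashv(b\vdash c)$, $(a\vdash b)\dashv c=a\vdash(b\dashv c)$, $(a\dashv b)\vdash c=a\vdash(b\vdash c)$, $(a\vdash b)\vdash c=a\vdash(b\vdash c)$, $(a\perp b)\perp c=a\perp(b\perp c)$, $(a\dashv b)\dashv c=p\,a\dashv(b\perp c)$, $(a\perp b)\dashv c=a\perp(b\dashv c)$, $(a\dashv b)\perp c=a\perp(b\vdash c)$, $(a\vdash b)\perp c=a\vdash(b\perp c)$, $p\,(a\perp b)\vdash c=a\vdash(b\vdash c)$. *)

From HB Require Import structures.
From mathcomp Require Import all_boot all_order all_algebra.
Set Implicit Arguments. Unset Strict Implicit. Unset Printing Implicit Defensive.
Import GRing.Theory.
Local Open Scope ring_scope.

(* Weight-2 tree monomials of the free ns operad on unary generators U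
   and binary generators B.  Reading of each monomial on inputs a,b,c:
     UU u v   = u o v              : a |-> u(v(a))            (arity 1)
     UB u m   = u o m              : (a,b) |-> u(m(a,b))      (arity 2)
     BU1 m u  = m o_1 u            : (a,b) |-> m(u(a),b)      (arity 2)
     BU2 m u  = m o_2 u            : (a,b) |-> m(a,u(b))      (arity 2)
     BB1 m n  = m o_1 n            : (a,b,c) |-> m(n(a,b),c)  (arity 3)
     BB2 m n  = m o_2 n            : (a,b,c) |-> m(a,n(b,c))  (arity 3) *)
Inductive tree2 (U B : Type) : Type :=
| UU  of U & U
| UB  of U & B
| BU1 of B & U
| BU2 of B & U
| BB1 of B & B
| BB2 of B & B.
Arguments UU {U B}. Arguments UB {U B}. Arguments BU1 {U B}.
Arguments BU2 {U B}. Arguments BB1 {U B}. Arguments BB2 {U B}.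

Section Tree2Fin.
Variables U B : finType.
Definition tree2_enc (t : tree2 U B) :
  ((U * U) + (U * B) + (B * U) + (B * U) + (B * B) + (B * B))%type :=
  match t with
  | UU u v => inl (inl (inl (inl (inl (u, v)))))
  | UB u m => inl (inl (inl (inl (inr (u, m)))))
  | BU1 m u => inl (inl (inl (inr (m, u))))
  | BU2 m u => inl (inl (inr (m, u)))
  | BB1 m n => inl (inr (m, n))
  | BB2 m n => inr (m, n)
  end.
Definition tree2_dec
  (x : ((U * U) + (U * B) + (B * U) + (B * U) + (B * B) + (B * B))%type)
  : tree2 U B :=
  match x with
  | inl (inl (inl (inl (inl (u, v))))) => UU u v
  | inl (inl (inl (inl (inr (u, m))))) => UB u m
  | inl (inl (inl (inr (m, u)))) => BU1 m u
  | inl (inl (inr (m, u))) => BU2 m u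
  | inl (inr (m, n)) => BB1 m n
  | inr (m, n) => BB2 m n
  end.
Lemma tree2_encK : cancel tree2_enc tree2_dec. Proof. by case. Qed.
HB.instance Definition _ := Finite.copy (tree2 U B) (can_type tree2_encK).
End Tree2Fin.

Definition wt2 (k : fieldType) (U B : finType) := {ffun tree2 U B -> k}.

Definition mono (k : fieldType) (U B : finType) (t : tree2 U B) : wt2 k U B :=
  [ffun s => (s == t)%:R].

(* Sign of the Loday--Vallette pairing F(E)^(2) (x) F(E^v)^(2) -> k on the
   (dual) basis monomials: partial composition in the second slot of a
   binary operation gets -1 (LV, ns binary case); composing a unary
   generator into an input of a binary operation gets -1 (Koszul sign of
   the suspension, so that Leibniz <-> centroid as for AsDer^!). *)
Definition pair_sign (k : fieldType) (U B : finType) (t : tree2 U B) : k :=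
  match t with
  | UU _ _ => 1 | UB _ _ => 1 | BU1 _ _ => -1 | BU2 _ _ => -1
  | BB1 _ _ => 1 | BB2 _ _ => -1
  end.

Definition pairing (k : fieldType) (U B : finType) (x y : wt2 k U B) : k :=
  \sum_(t : tree2 U B) pair_sign k t * x t * y t.

Definition rel_span (k : fieldType) (U B : finType) (rs : seq (wt2 k U B))
  (v : wt2 k U B) : Prop :=
  exists c : 'I_(size rs) -> k,
    forall t, v t = \sum_(i < size rs) c i * (rs`_i) t.

Definition sc (k : fieldType) (U B : finType) (a : k) (v : wt2 k U B)
  : wt2 k U B := [ffun t => a * v t].

(* The relation space R^perp of the Koszul dual P(E,R)^! = P(E^v, R^perp),
   E^v identified with E through the dual basis. *)
Definition koszul_dual_rels (k : fieldType) (U B : finType)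
  (rs : seq (wt2 k U B)) (y : wt2 k U B) : Prop :=
  forall x, rel_span rs x -> pairing x y = 0.

(* One unary generator (d, resp. its dual
   partial).  Three binary generators:
     OL  <->  prec  (tridendriform)   /  dashv (triassociative)
     OR  <->  succ                    /  vdash
     OM  <->  bullet                  /  perp                          *)
Inductive op3 := OL | OR | OM.
Definition op3_enc (o : op3) : 'I_3 :=
  match o with OL => inord 0 | OR => inord 1 | OM => inord 2 end.
Definition op3_dec (i : 'I_3) : op3 :=
  match val i with 0 => OL | 1 => OR | _ => OM end.
Lemma op3_encK : cancel op3_enc op3_dec.
Proof. by case; rewrite /op3_dec /= inordK. Qed.
HB.instance Definition _ := Finite.copy op3 (can_type op3_encK).

Notation V k := (wt2 k unit op3).
Notation m k t := (@mono k unit op3 t).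

(* Relations of the operad of differential q-tridendriform algebras of
   weight zero, with star_q = prec + succ + q bullet. *)
Definition leibniz_rel (k : fieldType) (o : op3) : V k :=
  m k (UB tt o) - m k (BU1 o tt) - m k (BU2 o tt).

Definition dtridend_rels (k : fieldType) (q : k) : seq (V k) :=
  [:: (* (a<b)<c = a<(b *_q c) *)
      m k (BB1 OL OL) - (m k (BB2 OL OL) + m k (BB2 OL OR) + sc q (m k (BB2 OL OM)));
      (* (a>b)<c = a>(b<c) *)
      m k (BB1 OL OR) - m k (BB2 OR OL);
      (* (a *_q b)>c = a>(b>c) *)
      (m k (BB1 OR OL) + m k (BB1 OR OR) + sc q (m k (BB1 OR OM))) - m k (BB2 OR OR);
      (* (a>b).c = a>(b.c) *)
      m k (BB1 OM OR) - m k (BB2 OR OM);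
      (* (a<b).c = a.(b>c) *)
      m k (BB1 OM OL) - m k (BB2 OM OR);
      (* (a.b)<c = a.(b<c) *)
      m k (BB1 OL OM) - m k (BB2 OM OL);
      (* (a.b).c = a.(b.c) *)
      m k (BB1 OM OM) - m k (BB2 OM OM);
      (* d(a*b) = d(a)*b + a*d(b) *)
      leibniz_rel k OL; leibniz_rel k OR; leibniz_rel k OM ].

Definition centroid_rel1 (k : fieldType) (o : op3) : V k :=
  m k (UB tt o) - m k (BU1 o tt).
Definition centroid_rel2 (k : fieldType) (o : op3) : V k :=
  m k (UB tt o) - m k (BU2 o tt).

Definition triass_centroid_rels (k : fieldType) (p : k) : seq (V k) :=
  [:: (* (a-|b)-|c = a-|(b-|c) *) m k (BB1 OL OL) - m k (BB2 OL OL);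
      (* (a-|b)-|c = a-|(b|-c) *) m k (BB1 OL OL) - m k (BB2 OL OR);
      (* (a|-b)-|c = a|-(b-|c) *) m k (BB1 OL OR) - m k (BB2 OR OL);
      (* (a-|b)|-c = a|-(b|-c) *) m k (BB1 OR OL) - m k (BB2 OR OR);
      (* (a|-b)|-c = a|-(b|-c) *) m k (BB1 OR OR) - m k (BB2 OR OR);
      (* (a_|_b)_|_c = a_|_(b_|_c) *) m k (BB1 OM OM) - m k (BB2 OM OM);
      (* (a-|b)-|c = p a-|(b_|_c) *) m k (BB1 OL OL) - sc p (m k (BB2 OL OM));
      (* (a_|_b)-|c = a_|_(b-|c) *) m k (BB1 OL OM) - m k (BB2 OM OL);
      (* (a-|b)_|_c = a_|_(b|-c) *) m k (BB1 OM OL) - m k (BB2 OM OR);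
      (* (a|-b)_|_c = a|-(b_|_c) *) m k (BB1 OM OR) - m k (BB2 OR OM);
      (* p (a_|_b)|-c = a|-(b|-c) *) sc p (m k (BB1 OR OM)) - m k (BB2 OR OR);
      (* partial(a*b) = partial(a)*b *)
      centroid_rel1 k OL; centroid_rel1 k OR; centroid_rel1 k OM;
      (* partial(a*b) = a*partial(b) *)
      centroid_rel2 k OL; centroid_rel2 k OR; centroid_rel2 k OM;
      (* partial o partial = 0 *)
      m k (UU tt tt) ].

From mathcomp Require Import all_boot all_order all_algebra.
From mathcomp Require Import ring.

(* The Koszul dual relation space R^perp is cut out by ten linear forms, the
   pairings against the ten differential q-tridendriform relations.  Each of
   the eighteen relations of the triassociative operad with square-zero
   centroid operator is annihilated by all ten forms (this uses p = 1/q), so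
   their span lies in R^perp, which is a subspace.  Conversely the forms
   express ten of the twenty-seven coordinates of an element of R^perp through
   the other seventeen, and each of these seventeen occurs in exactly one
   triassociative relation, which writes the element as an explicit
   combination of those relations. *)

Import GRing.Theory.
Local Open Scope ring_scope.

Section Pairing.
Variables (k : fieldType) (U B : finType).
Implicit Types (x y : wt2 k U B) (rs ss : seq (wt2 k U B)).

Lemma pairingC x y : pairing x y = pairing y x.
Proof. by apply: eq_bigr => t _; rewrite -!mulrA [x t * _]mulrC. Qed.

Lemma pairingD x1 x2 y : pairing (x1 + x2) y = pairing x1 y + pairing x2 y.
Proof. by rewrite -big_split; apply: eq_bigr => t _; rewrite ffunE mulrDr mulrDl. Qed.

Lemma pairingB x1 x2 y : pairing (x1 - x2) y = pairing x1 y - pairing x2 y.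
Proof. by rewrite -sumrB; apply: eq_bigr => t _; rewrite !ffunE; ring. Qed.

Lemma pairing_sc a x y : pairing (sc a x) y = a * pairing x y.
Proof. by rewrite mulr_sumr; apply: eq_bigr => t _; rewrite ffunE; ring. Qed.

Lemma monoE (t s : tree2 U B) : mono k t s = (s == t)%:R.
Proof. exact: ffunE. Qed.

Lemma pairing_mono t y : pairing (mono k t) y = pair_sign k t * y t.
Proof.
rewrite /pairing (bigD1 t) //= monoE eqxx mulr1 big1 ?addr0 // => s neq_st.
by rewrite monoE (negbTE neq_st) mulr0 mul0r.
Qed.

Lemma rel_span_nth rs i : (i < size rs)%N -> rel_span rs rs`_i.
Proof.
move=> lt_i; exists (fun j => (val j == i)%:R) => t.
rewrite (bigD1 (Ordinal lt_i)) //= eqxx mul1r big1 ?addr0 // => j neq_ji.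
suff /negbTE -> : val j != i by rewrite mul0r.
by apply: contra neq_ji => /eqP eq_ji; apply/eqP/val_inj.
Qed.

Lemma pairing_rel_span rs x y : rel_span rs x ->
  (forall i, (i < size rs)%N -> pairing rs`_i y = 0) -> pairing x y = 0.
Proof.
move=> [c def_x] rs_y0.
have -> : pairing x y = \sum_(i < size rs) c i * pairing rs`_i y.
  rewrite /pairing; under eq_bigr do rewrite def_x mulr_sumr mulr_suml.
  rewrite exchange_big; apply: eq_bigr => i _; rewrite mulr_sumr.
  by apply: eq_bigr => t _; ring.
by rewrite big1 // => i _; rewrite rs_y0 ?mulr0.
Qed.

Lemma koszul_dual_relsP rs y :
  koszul_dual_rels rs y <-> forall i, ([seq pairing r y | r <- rs])`_i = 0.
Proof.
split=> [rs_y0 i | rs_y0 x span_x].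
  have [lt_i | ge_i] := ltnP i (size rs); last by rewrite nth_default ?size_map.
  by rewrite (nth_map 0) //; apply: rs_y0; apply: rel_span_nth.
by apply: pairing_rel_span span_x _ => i lt_i; rewrite -(rs_y0 i) (nth_map 0).
Qed.

Lemma koszul_dual_rels_span rs ss :
  (forall j, (j < size ss)%N -> koszul_dual_rels rs ss`_j) ->
  forall y, rel_span ss y -> koszul_dual_rels rs y.
Proof.
move=> ss_dual y span_y x span_x; rewrite pairingC.
by apply: pairing_rel_span span_y _ => j lt_j; rewrite pairingC ss_dual.
Qed.

End Pairing.

Section DifferentialTridendriform.
Variables (k : fieldType) (q : k).
Implicit Types y : V k.

(* The i-th form is the pairing against the i-th differential q-tridendriform
   relation; its last summand is the coordinate it determines. *)
Definition dtridend_dual_forms y : seq k :=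
  [:: y (BB2 OL OL) + y (BB2 OL OR) + q * y (BB2 OL OM) + y (BB1 OL OL);
      y (BB1 OL OR) + y (BB2 OR OL);
      y (BB1 OR OL) + y (BB1 OR OR) + q * y (BB1 OR OM) + y (BB2 OR OR);
      y (BB1 OM OR) + y (BB2 OR OM);
      y (BB1 OM OL) + y (BB2 OM OR);
      y (BB1 OL OM) + y (BB2 OM OL);
      y (BB1 OM OM) + y (BB2 OM OM);
      y (BU1 OL tt) + y (BU2 OL tt) + y (UB tt OL);
      y (BU1 OR tt) + y (BU2 OR tt) + y (UB tt OR);
      y (BU1 OM tt) + y (BU2 OM tt) + y (UB tt OM)].

(* In the proofs below [mono] is generalized to an abstract [M] first:
   otherwise rewriting makes Rocq compare distinct closed finfuns by
   conversion, which is prohibitively slow. *)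
Lemma map_pairing_dtridend_rels y :
  [seq pairing r y | r <- dtridend_rels q] = dtridend_dual_forms y.
Proof.
rewrite /dtridend_rels /leibniz_rel.
move: (@mono k unit op3) (@pairing_mono k unit op3 ^~ y) => M M_pairing.
rewrite /= !(pairingB, pairingD, pairing_sc, M_pairing) /=.
by congr [:: _; _; _; _; _; _; _; _; _; _]; ring.
Qed.

Hypothesis q_neq0 : q != 0.

Lemma dtridend_dual_forms_triass j i :
  (dtridend_dual_forms (triass_centroid_rels q^-1)`_j)`_i = 0.
Proof.
rewrite /triass_centroid_rels /centroid_rel1 /centroid_rel2.
move: (@mono k unit op3) (@monoE k unit op3) => M M_coord.
do 18?[case: j => [|j]]; do 10?[case: i => [|i]];
  rewrite /= ?nth_nil ?ffunE ?M_coord /= ?eqxx; do ?[case: eqP => // _].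
all: by rewrite /=; field.
Qed.

Lemma dtridend_dual_forms_rel_span y :
  (forall i, (dtridend_dual_forms y)`_i = 0) ->
  rel_span (triass_centroid_rels q^-1) y.
Proof.
move=> forms_y0.
move: (forms_y0 0%N) (forms_y0 1%N) (forms_y0 2%N) (forms_y0 3%N) (forms_y0 4%N)
  (forms_y0 5%N) (forms_y0 6%N) (forms_y0 7%N) (forms_y0 8%N) (forms_y0 9%N) => /=.
move=> /addr0_eq form0 /addr0_eq form1 /addr0_eq form2 /addr0_eq form3 /addr0_eq form4.
move=> /addr0_eq form5 /addr0_eq form6 /addr0_eq form7 /addr0_eq form8 /addr0_eq form9.
pose cs := [:: - y (BB2 OL OL); - y (BB2 OL OR); y (BB1 OL OR);
    y (BB1 OR OL); y (BB1 OR OR); y (BB1 OM OM); - q * y (BB2 OL OM);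
    y (BB1 OL OM); y (BB1 OM OL); y (BB1 OM OR); q * y (BB1 OR OM);
    - y (BU1 OL tt); - y (BU1 OR tt); - y (BU1 OM tt);
    - y (BU2 OL tt); - y (BU2 OR tt); - y (BU2 OM tt); y (UU tt tt)].
exists (fun i => cs`_i) => t.
rewrite /triass_centroid_rels /centroid_rel1 /centroid_rel2.
move: (@mono k unit op3) (@monoE k unit op3) => M M_coord.
rewrite !big_ord_recl big_ord0 /= !ffunE !M_coord.
case: t => [[] []|[] []|[] []|[] []|[] []|[] []];
  rewrite /= ?eqxx; do ?[case: eqP => // _].
all: rewrite /= -?form0 -?form1 -?form2 -?form3 -?form4.
all: by rewrite -?form5 -?form6 -?form7 -?form8 -?form9; field.
Qed.

End DifferentialTridendriform.

Theorem proposition3p25 (k : fieldType) (q : k) (hq : q != 0) :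
  forall y : wt2 k unit op3,
    koszul_dual_rels (dtridend_rels q) y <-> rel_span (triass_centroid_rels q^-1) y.
Proof.
move=> y; split.
  move/koszul_dual_relsP; rewrite map_pairing_dtridend_rels.
  exact: dtridend_dual_forms_rel_span.
apply: koszul_dual_rels_span => j _; apply/koszul_dual_relsP.
by rewrite map_pairing_dtridend_rels; apply: dtridend_dual_forms_triass.
Qed.
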